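(* The polynomials $Q_A,R_A\in\mathbb Q[p,d]$ are nonzero at every point of $\Sigma_A^\circ:=\{(p,d):\tfrac12<p<1,\ 0<d<\tfrac12\}$, and the polynomials $Q_B,R_B\in\mathbb Q[p,d,e]$ are nonzero at every point of $\Sigma_B^\circ:=\{(p,d,e):\tfrac12<p<1,\ d>0,\ e>0,\ d+e<\tfrac12\}$, where \begin{align*} Q_A={}&8d^4-8d^3p+2d^3-48d^2p^2+22d^2p-3d^2-8dp^3+22dp^2-6dp+8p^4+2p^3-3p^2,\\ R_A={}&8d^4-2d^3-24d^2p^2+6d^2p-d^2+10dp^2-2dp+2p^3-p^2,\\ Q_B={}&8d^4+32d^3e-8d^3p+2d^3+40d^2e^2-56d^2ep+16d^2e-48d^2p^2+22d^2p-3d^2\\ &+16de^3-72de^2p+26de^2-72dep^2+44dep-6de-8dp^3+22dp^2-6dp\\ &-24e^3p+12e^3-32e^2p^2+22e^2p-3e^2+12ep^2-6ep+8p^4+2p^3-3p^2,\\ R_B={}&8d^4+32d^3e-2d^3+40d^2e^2-24d^2ep-24d^2p^2+6d^2p-d^2\\ &+16de^3-32de^2p+6de^2-24dep^2+12dep-2de+10dp^2-2dp\\ &-8e^3p+4e^3-8e^2p^2+6e^2p-e^2+4ep^2-2ep+2p^3-p^2. \end{align*} Moreover, the branch maps $F_0^A,F_1^A$ are $C^\infty$ on $\Sigma_A^\circ$ and $F_0^B,F_1^B$ are $C^\infty$ on $\Sigma_B^\circ$.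
   Context: Let $$L_A=\begin{pmatrix}1&1&-1&-1\\-1&1&1&1\\1&-1&-1&1\\1&-1&1&-1\end{pmatrix},\qquad L_B=\begin{pmatrix}1&1&-1&-1\\-1&1&1&1\\1&-1&-1&1\\1&-1&1&-1\\1&-1&1&1\end{pmatrix}.$$ For a sign matrix $L$ and a distribution $u$ on its rows, the one-step AdaBoost update using column $j$ is $u'_i=u_i/(1+\mu L_{ij})$ with $\mu=(u^\top L)_j$. Chart coordinates: $(p,d)$ corresponds to the distribution $(p-\tfrac12,\,1-p,\,\tfrac12-d,\,d)$ on the rows of $L_A$, and $(p,d,e)$ corresponds to $(p-\tfrac12,\,1-p,\,\tfrac12-d-e,\,d,\,e)$ on the rows of $L_B$. For $G\in\{A,B\}$, the branch map $F_0^G$ is the composition of the five one-step updates on $L_G$ using columns $1,3,4,1,2$ in this order, and $F_1^G$ the composition using columns $1,4,3,1,2$, each applied to the distribution given by the chart coordinates and with the output (whose first two entries sum to $\tfrac12$) expressed again in chart coordinates. The polynomials $Q_A$ and $R_A$ are the reduced denominators of the first and second chart coordinates of $F_0^A$, and $Q_B,R_B$ are the reduced denominators of the coordinates of $F_0^B$ (with $R_B$ the common denominator of its second and third coordinates). *)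

From HB Require Import structures.
From mathcomp Require Import all_boot all_order all_algebra.
From mathcomp Require Import all_classical all_reals all_analysis.
Set Implicit Arguments. Unset Strict Implicit. Unset Printing Implicit Defensive.
Import Order.TTheory GRing.Theory Num.Theory.
Import numFieldNormedType.Exports.
Local Open Scope classical_set_scope.
Local Open Scope ring_scope.

Definition rowl (R : nzRingType) (n : nat) (s : seq R) : 'rV[R]_n :=
  \row_(i < n) nth 0 s i.

Definition LA (R : nzRingType) : 'M[R]_(4,4) :=
  \matrix_(i < 4, j < 4) nth 0 (nth [::]
    [:: [:: 1; 1; -1; -1];
        [:: -1; 1; 1; 1];
        [:: 1; -1; -1; 1];
        [:: 1; -1; 1; -1]] i) j.

Definition LB (R : nzRingType) : 'M[R]_(5,4) :=
  \matrix_(i < 5, j < 4) nth 0 (nth [::]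
    [:: [:: 1; 1; -1; -1];
        [:: -1; 1; 1; 1];
        [:: 1; -1; -1; 1];
        [:: 1; -1; 1; -1];
        [:: 1; -1; 1; 1]] i) j.

(* One-step AdaBoost update with column j: u'_i = u_i / (1 + mu L_ij),
   mu = (u^T L)_j.  Distributions are row vectors. *)
Definition ab_step (R : fieldType) (m n : nat) (L : 'M[R]_(m,n)) (j : 'I_n)
  (u : 'rV[R]_m) : 'rV[R]_m :=
  let mu := (u *m L) 0 j in \row_(i < m) (u 0 i / (1 + mu * L i j)).

Definition ab_branch (R : fieldType) (m : nat) (L : 'M[R]_(m,4))
  (c1 c2 c3 c4 c5 : 'I_4) (u : 'rV[R]_m) : 'rV[R]_m :=
  ab_step L c5 (ab_step L c4 (ab_step L c3 (ab_step L c2 (ab_step L c1 u)))).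

Definition chartA (R : fieldType) (x : 'rV[R]_2) : 'rV[R]_4 :=
  let p := x 0 0 in let d := x 0 1 in
  rowl 4 [:: p - 2^-1; 1 - p; 2^-1 - d; d].
Definition chartB (R : fieldType) (x : 'rV[R]_3) : 'rV[R]_5 :=
  let p := x 0 0 in let d := x 0 1 in let e := x 0 2 in
  rowl 5 [:: p - 2^-1; 1 - p; 2^-1 - d - e; d; e].

Definition unchartA (R : fieldType) (u : 'rV[R]_4) : 'rV[R]_2 :=
  rowl 2 [:: u 0 0 + 2^-1; u 0 3].
Definition unchartB (R : fieldType) (u : 'rV[R]_5) : 'rV[R]_3 :=
  rowl 3 [:: u 0 0 + 2^-1; u 0 3; u 0 4].

(* Branch maps: F_0 uses columns 1,3,4,1,2 ; F_1 uses columns 1,4,3,1,2. *)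
Definition F0A (R : fieldType) (x : 'rV[R]_2) : 'rV[R]_2 :=
  unchartA (ab_branch (LA R) (inord 0) (inord 2) (inord 3) (inord 0) (inord 1) (chartA x)).
Definition F1A (R : fieldType) (x : 'rV[R]_2) : 'rV[R]_2 :=
  unchartA (ab_branch (LA R) (inord 0) (inord 3) (inord 2) (inord 0) (inord 1) (chartA x)).
Definition F0B (R : fieldType) (x : 'rV[R]_3) : 'rV[R]_3 :=
  unchartB (ab_branch (LB R) (inord 0) (inord 2) (inord 3) (inord 0) (inord 1) (chartB x)).
Definition F1B (R : fieldType) (x : 'rV[R]_3) : 'rV[R]_3 :=
  unchartB (ab_branch (LB R) (inord 0) (inord 3) (inord 2) (inord 0) (inord 1) (chartB x)).

Definition SigmaA (R : realType) : set 'rV[R]_2 :=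
  [set x | 2^-1 < x 0 0 < 1 /\ 0 < x 0 1 < 2^-1].
Definition SigmaB (R : realType) : set 'rV[R]_3 :=
  [set x | 2^-1 < x 0 0 < 1 /\ 0 < x 0 1 /\ 0 < x 0 2 /\ x 0 1 + x 0 2 < 2^-1].

Definition QA (R : nzRingType) (p d : R) : R :=
  8 * d^+4 - 8 * d^+3 * p + 2 * d^+3 - 48 * d^+2 * p^+2 + 22 * d^+2 * p - 3 * d^+2 - 8 * d * p^+3
  + 22 * d * p^+2 - 6 * d * p + 8 * p^+4 + 2 * p^+3 - 3 * p^+2.
Definition RA (R : nzRingType) (p d : R) : R :=
  8 * d^+4 - 2 * d^+3 - 24 * d^+2 * p^+2 + 6 * d^+2 * p - d^+2 + 10 * d * p^+2 - 2 * d * p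
  + 2 * p^+3 - p^+2.
Definition QB (R : nzRingType) (p d e : R) : R :=
  8 * d^+4 + 32 * d^+3 * e - 8 * d^+3 * p + 2 * d^+3 + 40 * d^+2 * e^+2 - 56 * d^+2 * e * p
  + 16 * d^+2 * e - 48 * d^+2 * p^+2 + 22 * d^+2 * p - 3 * d^+2
  + 16 * d * e^+3 - 72 * d * e^+2 * p + 26 * d * e^+2 - 72 * d * e * p^+2 + 44 * d * e * p - 6 * d * e
  - 8 * d * p^+3 + 22 * d * p^+2 - 6 * d * p
  - 24 * e^+3 * p + 12 * e^+3 - 32 * e^+2 * p^+2 + 22 * e^+2 * p - 3 * e^+2 + 12 * e * p^+2
  - 6 * e * p + 8 * p^+4 + 2 * p^+3 - 3 * p^+2.
Definition RB (R : nzRingType) (p d e : R) : R :=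
  8 * d^+4 + 32 * d^+3 * e - 2 * d^+3 + 40 * d^+2 * e^+2 - 24 * d^+2 * e * p - 24 * d^+2 * p^+2
  + 6 * d^+2 * p - d^+2
  + 16 * d * e^+3 - 32 * d * e^+2 * p + 6 * d * e^+2 - 24 * d * e * p^+2 + 12 * d * e * p - 2 * d * e
  + 10 * d * p^+2 - 2 * d * p
  - 8 * e^+3 * p + 4 * e^+3 - 8 * e^+2 * p^+2 + 6 * e^+2 * p - e^+2 + 4 * e * p^+2 - 2 * e * p
  + 2 * p^+3 - p^+2.

Fixpoint iter_deriv (R : realType) (V W : normedModType R) (vs : seq V)
  (f : V -> W) : V -> W :=
  match vs with
  | [::] => f
  | v :: vs' => fun x => derive (iter_deriv vs' f) x v
  end.

Definition smooth_on (R : realType) (V W : normedModType R) (U : set V)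
  (f : V -> W) : Prop :=
  forall vs : seq V, forall x, U x ->
    {for x, continuous (iter_deriv vs f)} /\
    forall v : V, derivable (iter_deriv vs f) x v.

From HB Require Import structures.
From mathcomp Require Import all_boot all_order all_algebra.
From mathcomp Require Import all_classical all_reals all_analysis.
From mathcomp Require Import ring lra.
Import Order.TTheory GRing.Theory Num.Theory.
Import numFieldNormedType.Exports.
Local Open Scope classical_set_scope.
Local Open Scope ring_scope.
Set Implicit Arguments. Unset Strict Implicit. Unset Printing Implicit Defensive.

(* On the open simplices the barycentric coordinates a = p - 1/2, b = 1 - p,
   c = 1/2 - d (- e), d (, e) are all positive.  Homogenizing with a + b = 1/2
   and c + d (+ e) = 1/2 turns each of Q_A, R_A, Q_B, R_B into 64 times a form
   with positive coefficients in these coordinates, so none of them vanishes.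

   An AdaBoost step maps a positive distribution to a positive distribution, and
   its denominators 1 + mu L_ij are positive on positive distributions.  Hence
   every coordinate of a branch map is a rational function of the chart
   coordinates whose denominators do not vanish on the open simplex.  Such
   functions are continuous and their directional derivatives are again such
   functions, so the branch maps are C^oo. *)

Section Positivity.
Variable R : realFieldType.
Implicit Types a b c d e p : R.

Definition QA_hom a b c d : R :=
  28 * a^+4 * c^+4 + 128 * a^+4 * c^+3 * d + 187 * a^+4 * c^+2 * d^+2
  + 99 * a^+4 * c * d^+3 + 14 * a^+4 * d^+4 + 48 * a^+3 * b * c^+4
  + 242 * a^+3 * b * c^+3 * d + 359 * a^+3 * b * c^+2 * d^+2
  + 174 * a^+3 * b * c * d^+3 + 17 * a^+3 * b * d^+4 + 27 * a^+2 * b^+2 * c^+4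
  + 161 * a^+2 * b^+2 * c^+3 * d + 246 * a^+2 * b^+2 * c^+2 * d^+2
  + 105 * a^+2 * b^+2 * c * d^+3 + 5 * a^+2 * b^+2 * d^+4
  + 5 * a * b^+3 * c^+4 + 42 * a * b^+3 * c^+3 * d
  + 67 * a * b^+3 * c^+2 * d^+2 + 22 * a * b^+3 * c * d^+3
  + 3 * b^+4 * c^+3 * d + 5 * b^+4 * c^+2 * d^+2.

Definition RA_hom a b c d : R :=
  4 * a^+4 * c^+4 + 32 * a^+4 * c^+3 * d + 53 * a^+4 * c^+2 * d^+2
  + 25 * a^+4 * c * d^+3 + 2 * a^+4 * d^+4 + 8 * a^+3 * b * c^+4
  + 78 * a^+3 * b * c^+3 * d + 131 * a^+3 * b * c^+2 * d^+2
  + 56 * a^+3 * b * c * d^+3 + 3 * a^+3 * b * d^+4 + 5 * a^+2 * b^+2 * c^+4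
  + 67 * a^+2 * b^+2 * c^+3 * d + 114 * a^+2 * b^+2 * c^+2 * d^+2
  + 41 * a^+2 * b^+2 * c * d^+3 + a^+2 * b^+2 * d^+4 + a * b^+3 * c^+4
  + 24 * a * b^+3 * c^+3 * d + 41 * a * b^+3 * c^+2 * d^+2
  + 10 * a * b^+3 * c * d^+3 + 3 * b^+4 * c^+3 * d + 5 * b^+4 * c^+2 * d^+2.

Definition QB_hom a b c d e : R :=
  28 * a^+4 * c^+4 + 128 * a^+4 * c^+3 * d + 124 * a^+4 * c^+3 * e
  + 187 * a^+4 * c^+2 * d^+2 + 386 * a^+4 * c^+2 * d * e
  + 191 * a^+4 * c^+2 * e^+2 + 99 * a^+4 * c * d^+3
  + 322 * a^+4 * c * d^+2 * e + 339 * a^+4 * c * d * e^+2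
  + 116 * a^+4 * c * e^+3 + 14 * a^+4 * d^+4 + 65 * a^+4 * d^+3 * e
  + 109 * a^+4 * d^+2 * e^+2 + 79 * a^+4 * d * e^+3 + 21 * a^+4 * e^+4
  + 48 * a^+3 * b * c^+4 + 242 * a^+3 * b * c^+3 * d
  + 222 * a^+3 * b * c^+3 * e + 359 * a^+3 * b * c^+2 * d^+2
  + 730 * a^+3 * b * c^+2 * d * e + 347 * a^+3 * b * c^+2 * e^+2
  + 174 * a^+3 * b * c * d^+3 + 570 * a^+3 * b * c * d^+2 * e
  + 598 * a^+3 * b * c * d * e^+2 + 202 * a^+3 * b * c * e^+3
  + 17 * a^+3 * b * d^+4 + 84 * a^+3 * b * d^+3 * e
  + 146 * a^+3 * b * d^+2 * e^+2 + 108 * a^+3 * b * d * e^+3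
  + 29 * a^+3 * b * e^+4 + 27 * a^+2 * b^+2 * c^+4
  + 161 * a^+2 * b^+2 * c^+3 * d + 132 * a^+2 * b^+2 * c^+3 * e
  + 246 * a^+2 * b^+2 * c^+2 * d^+2 + 483 * a^+2 * b^+2 * c^+2 * d * e
  + 211 * a^+2 * b^+2 * c^+2 * e^+2 + 105 * a^+2 * b^+2 * c * d^+3
  + 342 * a^+2 * b^+2 * c * d^+2 * e + 353 * a^+2 * b^+2 * c * d * e^+2
  + 116 * a^+2 * b^+2 * c * e^+3 + 5 * a^+2 * b^+2 * d^+4
  + 27 * a^+2 * b^+2 * d^+3 * e + 49 * a^+2 * b^+2 * d^+2 * e^+2
  + 37 * a^+2 * b^+2 * d * e^+3 + 10 * a^+2 * b^+2 * e^+4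
  + 5 * a * b^+3 * c^+4 + 42 * a * b^+3 * c^+3 * d + 26 * a * b^+3 * c^+3 * e
  + 67 * a * b^+3 * c^+2 * d^+2 + 122 * a * b^+3 * c^+2 * d * e
  + 43 * a * b^+3 * c^+2 * e^+2 + 22 * a * b^+3 * c * d^+3
  + 70 * a * b^+3 * c * d^+2 * e + 70 * a * b^+3 * c * d * e^+2
  + 22 * a * b^+3 * c * e^+3 + 3 * b^+4 * c^+3 * d + 5 * b^+4 * c^+2 * d^+2
  + 7 * b^+4 * c^+2 * d * e.

Definition RB_hom a b c d e : R :=
  4 * a^+4 * c^+4 + 32 * a^+4 * c^+3 * d + 20 * a^+4 * c^+3 * e
  + 53 * a^+4 * c^+2 * d^+2 + 94 * a^+4 * c^+2 * d * e
  + 33 * a^+4 * c^+2 * e^+2 + 25 * a^+4 * c * d^+3 + 78 * a^+4 * c * d^+2 * e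
  + 73 * a^+4 * c * d * e^+2 + 20 * a^+4 * c * e^+3 + 2 * a^+4 * d^+4
  + 11 * a^+4 * d^+3 * e + 19 * a^+4 * d^+2 * e^+2 + 13 * a^+4 * d * e^+3
  + 3 * a^+4 * e^+4 + 8 * a^+3 * b * c^+4 + 78 * a^+3 * b * c^+3 * d
  + 42 * a^+3 * b * c^+3 * e + 131 * a^+3 * b * c^+2 * d^+2
  + 226 * a^+3 * b * c^+2 * d * e + 71 * a^+3 * b * c^+2 * e^+2
  + 56 * a^+3 * b * c * d^+3 + 174 * a^+3 * b * c * d^+2 * e
  + 160 * a^+3 * b * c * d * e^+2 + 42 * a^+3 * b * c * e^+3
  + 3 * a^+3 * b * d^+4 + 18 * a^+3 * b * d^+3 * e
  + 32 * a^+3 * b * d^+2 * e^+2 + 22 * a^+3 * b * d * e^+3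
  + 5 * a^+3 * b * e^+4 + 5 * a^+2 * b^+2 * c^+4 + 67 * a^+2 * b^+2 * c^+3 * d
  + 28 * a^+2 * b^+2 * c^+3 * e + 114 * a^+2 * b^+2 * c^+2 * d^+2
  + 189 * a^+2 * b^+2 * c^+2 * d * e + 49 * a^+2 * b^+2 * c^+2 * e^+2
  + 41 * a^+2 * b^+2 * c * d^+3 + 126 * a^+2 * b^+2 * c * d^+2 * e
  + 113 * a^+2 * b^+2 * c * d * e^+2 + 28 * a^+2 * b^+2 * c * e^+3
  + a^+2 * b^+2 * d^+4 + 7 * a^+2 * b^+2 * d^+3 * e
  + 13 * a^+2 * b^+2 * d^+2 * e^+2 + 9 * a^+2 * b^+2 * d * e^+3
  + 2 * a^+2 * b^+2 * e^+4 + a * b^+3 * c^+4 + 24 * a * b^+3 * c^+3 * d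
  + 6 * a * b^+3 * c^+3 * e + 41 * a * b^+3 * c^+2 * d^+2
  + 64 * a * b^+3 * c^+2 * d * e + 11 * a * b^+3 * c^+2 * e^+2
  + 10 * a * b^+3 * c * d^+3 + 30 * a * b^+3 * c * d^+2 * e
  + 26 * a * b^+3 * c * d * e^+2 + 6 * a * b^+3 * c * e^+3
  + 3 * b^+4 * c^+3 * d + 5 * b^+4 * c^+2 * d^+2 + 7 * b^+4 * c^+2 * d * e.

Lemma QA_homE p d : QA p d = 64 * QA_hom (p - 2^-1) (1 - p) (2^-1 - d) d.
Proof. by rewrite /QA /QA_hom; field. Qed.

Lemma RA_homE p d : RA p d = 64 * RA_hom (p - 2^-1) (1 - p) (2^-1 - d) d.
Proof. by rewrite /RA /RA_hom; field. Qed.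

Lemma QB_homE p d e : QB p d e = 64 * QB_hom (p - 2^-1) (1 - p) (2^-1 - d - e) d e.
Proof. by rewrite /QB /QB_hom; field. Qed.

Lemma RB_homE p d e : RB p d e = 64 * RB_hom (p - 2^-1) (1 - p) (2^-1 - d - e) d e.
Proof. by rewrite /RB /RB_hom; field. Qed.

Ltac positive_monomials := repeat lazymatch goal with
  | |- is_true (0 < _ + _) => apply: addr_gt0
  | |- is_true (0 < _ * _) => apply: mulr_gt0
  | |- is_true (0 < _ ^+ _) => apply: exprn_gt0
  | |- is_true (0 < _ %:R) => by rewrite ltr0n
  | |- _ => assumption
  end.

Lemma QA_hom_gt0 a b c d : 0 < a -> 0 < b -> 0 < c -> 0 < d -> 0 < QA_hom a b c d.
Proof. by move=> *; rewrite /QA_hom; positive_monomials. Qed.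

Lemma RA_hom_gt0 a b c d : 0 < a -> 0 < b -> 0 < c -> 0 < d -> 0 < RA_hom a b c d.
Proof. by move=> *; rewrite /RA_hom; positive_monomials. Qed.

Lemma QB_hom_gt0 a b c d e :
  0 < a -> 0 < b -> 0 < c -> 0 < d -> 0 < e -> 0 < QB_hom a b c d e.
Proof. by move=> *; rewrite /QB_hom; positive_monomials. Qed.

Lemma RB_hom_gt0 a b c d e :
  0 < a -> 0 < b -> 0 < c -> 0 < d -> 0 < e -> 0 < RB_hom a b c d e.
Proof. by move=> *; rewrite /RB_hom; positive_monomials. Qed.

Lemma QA_gt0 p d : 2^-1 < p < 1 -> 0 < d < 2^-1 -> 0 < QA p d.
Proof.
move=> /andP[? ?] /andP[? ?]; rewrite QA_homE mulr_gt0 // QA_hom_gt0 //; lra.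
Qed.

Lemma RA_gt0 p d : 2^-1 < p < 1 -> 0 < d < 2^-1 -> 0 < RA p d.
Proof.
move=> /andP[? ?] /andP[? ?]; rewrite RA_homE mulr_gt0 // RA_hom_gt0 //; lra.
Qed.

Lemma QB_gt0 p d e : 2^-1 < p < 1 -> 0 < d -> 0 < e -> d + e < 2^-1 -> 0 < QB p d e.
Proof.
move=> /andP[? ?] ? ? ?; rewrite QB_homE mulr_gt0 // QB_hom_gt0 //; lra.
Qed.

Lemma RB_gt0 p d e : 2^-1 < p < 1 -> 0 < d -> 0 < e -> d + e < 2^-1 -> 0 < RB p d e.
Proof.
move=> /andP[? ?] ? ? ?; rewrite RB_homE mulr_gt0 // RB_hom_gt0 //; lra.
Qed.

End Positivity.

Lemma continuous_mx_at (R : numFieldType) (T : topologicalType) m k (F : T -> 'M[R]_(m, k)) x :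
  (forall i j, {for x, continuous (fun y => F y i j)}) -> {for x, continuous F}.
Proof.
move=> cF; have F_delta y : F y = \sum_i \sum_j F y i j *: delta_mx i j.
  exact: matrix_sum_delta.
rewrite /prop_for /continuous_at; under eq_cvg do rewrite F_delta.
rewrite F_delta.
apply: cvg_big => // [|i _]; first exact: add_continuous.
apply: cvg_big => // [|j _]; first exact: add_continuous.
by apply: cvgZ; [exact: cF|exact: cvg_cst].
Qed.

Section RationalOn.
Variables (R : realType) (n : nat) (U : set 'rV[R]_n).
Hypothesis U_open : open U.

Let near_U x : U x -> \forall y \near x, U y.
Proof. by move=> Ux; apply: open_nbhs_nbhs. Qed.

Inductive rational_on : ('rV[R]_n -> R) -> Prop :=
| rational_cst c : rational_on (fun _ => c)
| rational_coord i : rational_on (fun y => y 0 i)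
| rational_add f g : rational_on f -> rational_on g -> rational_on (fun y => f y + g y)
| rational_opp f : rational_on f -> rational_on (fun y => - f y)
| rational_mul f g : rational_on f -> rational_on g -> rational_on (fun y => f y * g y)
| rational_inv f : rational_on f -> (forall x, U x -> f x != 0) ->
    rational_on (fun y => (f y)^-1)
| rational_eq_on f g : rational_on f -> (forall x, U x -> f x = g x) -> rational_on g.

Lemma rational_on_continuous f : rational_on f -> forall x, U x -> {for x, continuous f}.
Proof.
elim=> {f} [c|i|f g _ cf _ cg|f _ cf|f g _ cf _ cg|f _ cf f_neq0|f g _ cf fg] x Ux.
- exact: cst_continuous.
- exact: coord_continuous.
- exact: cvgD (cf x Ux) (cg x Ux).
- exact: cvgN (cf x Ux).
- exact: cvgM (cf x Ux) (cg x Ux).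
- exact: cvgV (f_neq0 x Ux) (cf x Ux).
- have cfg : f @ x --> g x by rewrite -fg //; exact: cf.
  apply: cvg_trans cfg; apply: (near_eq_cvg (F := nbhs x)).
  near=> y; rewrite fg //; near: y; exact: near_U.
Unshelve. all: by end_near.
Qed.

Lemma is_derive_coord (x v : 'rV[R]_n) i :
  is_derive x v (fun y : 'rV[R]_n => y 0 i) (v 0 i).
Proof.
apply: DeriveDef; first exact/diff_derivable/differentiable_coord.
rewrite /derive; apply: cvg_lim => //; apply: cvg_near_cst; near=> h.
have h_neq0 : h != 0 by near: h; exact: nbhs_dnbhs_neq.
by rewrite /= !mxE addrK /GRing.scale /= mulrA mulVf // mul1r.
Unshelve. all: by end_near.
Qed.

Lemma rational_on_derive f v : rational_on f ->
  exists2 g, rational_on g & forall x, U x -> is_derive x v f (g x).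
Proof.
elim=> {f} [c|i|f g _ [f' rf' df] _ [g' rg' dg]|f _ [f' rf' df]
  |f g rf [f' rf' df] rg [g' rg' dg]|f rf [f' rf' df] f_neq0|f g _ [f' rf' df] fg].
- by exists (fun _ => 0) => [|x _]; [exact: rational_cst|exact: is_derive_cst].
- by exists (fun _ => v 0 i) => [|x _]; [exact: rational_cst|exact: is_derive_coord].
- exists (fun y => f' y + g' y) => [|x Ux]; first exact: rational_add.
  by have := df x Ux; have := dg x Ux => *; exact: is_deriveD.
- exists (fun y => - f' y) => [|x Ux]; first exact: rational_opp.
  by have := df x Ux => *; exact: is_deriveN.
- exists (fun y => f y * g' y + g y * f' y) => [|x Ux].
    by apply: rational_add; apply: rational_mul.
  by have := df x Ux; have := dg x Ux => *; exact: is_deriveM.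
- exists (fun y => - ((f y)^-1 * (f y)^-1) * f' y) => [|x Ux].
    apply: rational_mul rf'; apply: rational_opp.
    by apply: rational_mul; apply: rational_inv.
  have df_x := df x Ux; have f_derivable : derivable f x v by case: df_x.
  apply: DeriveDef; first exact: derivableV (f_neq0 x Ux) f_derivable.
  by rewrite (deriveV (f_neq0 x Ux) f_derivable) derive_val /GRing.scale /= expr2 invfM.
- exists f' => // x Ux; apply: near_eq_is_derive (df x Ux).
  near=> y; apply: fg; near: y; exact: near_U.
Unshelve. all: by end_near.
Qed.

Lemma rational_on_derivable f x v : rational_on f -> U x -> derivable f x v.
Proof. by move=> /rational_on_derive-/(_ v)[g _ dg] /dg[]. Qed.

Lemma rational_on_iter_deriv f vs : rational_on f -> rational_on (iter_deriv vs f).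
Proof.
move=> rf; elim: vs => [|v vs IH] //=.
have [g rg dg] := rational_on_derive v IH.
by apply: rational_eq_on rg _ => x /dg dgx; rewrite derive_val.
Qed.

Lemma rational_on_derive_mx m k (F : 'rV[R]_n -> 'M[R]_(m, k)) v :
  (forall i j, rational_on (fun y => F y i j)) ->
  forall i j, rational_on (fun y => 'D_v F y i j).
Proof.
move=> rF i j; apply: rational_eq_on (rational_on_iter_deriv [:: v] (rF i j)) _ => x Ux /=.
rewrite derive_mx ?mxE //; apply/derivable_mxP => i' j'.
exact: rational_on_derivable.
Qed.

Lemma rational_on_iter_deriv_mx m k (F : 'rV[R]_n -> 'M[R]_(m, k)) vs :
  (forall i j, rational_on (fun y => F y i j)) ->
  forall i j, rational_on (fun y => iter_deriv vs F y i j).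
Proof. by elim: vs => //= v vs IH rF; apply: rational_on_derive_mx; exact: IH. Qed.

Lemma rational_on_smooth m k (F : 'rV[R]_n -> 'M[R]_(m, k)) :
  (forall i j, rational_on (fun y => F y i j)) -> smooth_on U F.
Proof.
move=> rF vs x Ux; have rG := rational_on_iter_deriv_mx vs rF; split.
  by apply: continuous_mx_at => i j; exact: rational_on_continuous.
by move=> v; apply/derivable_mxP => i j; exact: rational_on_derivable.
Qed.

End RationalOn.

Ltac rational_by_cases :=
  repeat first [ exact: rational_cst | exact: rational_coord
               | apply: rational_add | apply: rational_opp ].

Section AdaBoostStep.
Variables (R : realFieldType) (m n : nat) (L : 'M[R]_(m, n)) (j : 'I_n).
Hypothesis L_sign : forall i, L i j = 1 \/ L i j = -1.
Hypothesis L_pos : exists i, L i j = 1.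
Hypothesis L_neg : exists i, L i j = -1.

Definition positive_distribution (u : 'rV[R]_m) :=
  (forall i, 0 < u 0 i) /\ \sum_i u 0 i = 1.

Lemma step_denomE (u : 'rV[R]_m) s : \sum_i u 0 i = 1 ->
  1 + (u *m L) 0 j * s = \sum_k u 0 k * (1 + L k j * s).
Proof.
move=> u_sum1; rewrite mxE mulr_suml.
under [RHS]eq_bigr do rewrite mulrDr mulr1 mulrA.
by rewrite big_split /= u_sum1.
Qed.

(* The denominator is a convex combination of the terms 1 + L k j L i j, which
   are 0 or 2, and the one with k = i equals 2. *)
Lemma step_denom_gt0 (u : 'rV[R]_m) i : positive_distribution u ->
  0 < 1 + (u *m L) 0 j * L i j.
Proof.
move=> [u_gt0 u_sum1]; rewrite step_denomE // (bigD1 i) //=.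
have term_i : 0 < u 0 i * (1 + L i j * L i j).
  by have := u_gt0 i; case: (L_sign i) => ->; lra.
have rest : 0 <= \sum_(k | k != i) u 0 k * (1 + L k j * L i j).
  apply: sumr_ge0 => k _; have := u_gt0 k.
  by case: (L_sign i) => ->; case: (L_sign k) => ->; lra.
lra.
Qed.

Lemma ab_step_distribution (u : 'rV[R]_m) : positive_distribution u ->
  positive_distribution (ab_step L j u).
Proof.
move=> u_dist; have [u_gt0 u_sum1] := u_dist.
have [ip Lip] := L_pos; have [ineg Lineg] := L_neg.
set mu := (u *m L) 0 j.
have mu_lt1 : 0 < 1 - mu by have := step_denom_gt0 ineg u_dist; rewrite Lineg mulrN1.
have mu_gtN1 : 0 < 1 + mu by have := step_denom_gt0 ip u_dist; rewrite Lip mulr1.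
split=> [i|].
  by rewrite mxE divr_gt0 ?u_gt0 ?step_denom_gt0.
(* Split u'_i along the sign of L_ij; each half sums to 1/2. *)
have split_step i : ab_step L j u 0 i =
    u 0 i * (1 + L i j * 1) / 2 / (1 + mu) + u 0 i * (1 + L i j * -1) / 2 / (1 - mu).
  rewrite mxE -/mu; case: (L_sign i) => ->; rewrite ?mulr1 ?mulrN1;
    by field; rewrite !gt_eqF.
under eq_bigr do rewrite split_step.
rewrite big_split /= -!mulr_suml -!step_denomE // mulr1 mulrN1 -/mu.
by field; rewrite !gt_eqF.
Qed.

End AdaBoostStep.

Definition pm1_column (R : nzRingType) m n (L : 'M[R]_(m, n)) j :=
  [/\ forall i, L i j = 1 \/ L i j = -1, exists i, L i j = 1 & exists i, L i j = -1].

Section RationalDistribution.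
Variables (R : realType) (n : nat) (U : set 'rV[R]_n).

Definition rational_distribution_on m (u : 'rV[R]_n -> 'rV[R]_m) :=
  (forall i, rational_on U (fun y => u y 0 i)) /\
  (forall y, U y -> positive_distribution (u y)).

Lemma rational_on_sum (I : Type) (r : seq I) (f : I -> 'rV[R]_n -> R) :
  (forall k, rational_on U (f k)) -> rational_on U (fun y => \sum_(k <- r) f k y).
Proof.
move=> rf; elim: r => [|a r IH].
  by apply: rational_eq_on (rational_cst U 0) _ => y _; rewrite big_nil.
by apply: rational_eq_on (rational_add (rf a) IH) _ => y _; rewrite big_cons.
Qed.

Lemma ab_step_rational m p (L : 'M[R]_(m, p)) j (u : 'rV[R]_n -> 'rV[R]_m) :
  pm1_column L j -> rational_distribution_on u ->
  rational_distribution_on (fun y => ab_step L j (u y)).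
Proof.
move=> [L_sign L_pos L_neg] [ru u_dist].
split=> [i|y Uy]; last exact: ab_step_distribution (u_dist y Uy).
have r_denom : rational_on U (fun y => 1 + (\sum_k u y 0 k * L k j) * L i j).
  apply: rational_add (rational_cst _ _) (rational_mul _ (rational_cst _ _)).
  by apply: rational_on_sum => l; apply: rational_mul (ru l) (rational_cst _ _).
apply: rational_eq_on (rational_mul (ru i) (rational_inv r_denom _)) _.
  by move=> x Ux; have := step_denom_gt0 L_sign i (u_dist x Ux); rewrite mxE => /gt_eqF->.
by move=> y _; rewrite !mxE.
Qed.

Lemma ab_branch_rational m (L : 'M[R]_(m, 4)) c1 c2 c3 c4 c5 (u : 'rV[R]_n -> 'rV[R]_m) :
  (forall j, pm1_column L j) -> rational_distribution_on u ->
  rational_distribution_on (fun y => ab_branch L c1 c2 c3 c4 c5 (u y)).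
Proof. by move=> L_pm1 ru; do 5 apply: ab_step_rational => //. Qed.

Lemma rational_on_rowl k (s : 'rV[R]_n -> seq R) :
  (forall l, rational_on U (fun y => nth 0 (s y) l)) ->
  forall i j, rational_on U (fun y => rowl k (s y) i j).
Proof. by move=> rs i j; apply: rational_eq_on (rs j) _ => y _; rewrite mxE. Qed.

End RationalDistribution.

Ltac exists_row := first
  [ exists (inord 0); by rewrite mxE inordK
  | exists (inord 1); by rewrite mxE inordK
  | exists (inord 2); by rewrite mxE inordK ].

Ltac pm1_column_by_cases :=
  case=> [[|[|[|[|j]]]] Hj] //; (split;
  [ case=> [[|[|[|[|[|i]]]]] Hi] //; rewrite mxE /=; by [left|right]
  | exists_row | exists_row ]).

Lemma LA_pm1 (R : nzRingType) j : pm1_column (LA R) j.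
Proof. by move: j; pm1_column_by_cases. Qed.

Lemma LB_pm1 (R : nzRingType) j : pm1_column (LB R) j.
Proof. by move: j; pm1_column_by_cases. Qed.

Lemma near_lt_continuous (R : realFieldType) (T : topologicalType) (f g : T -> R) x :
  {for x, continuous f} -> {for x, continuous g} -> f x < g x ->
  \forall y \near x, f y < g y.
Proof.
move=> cf cg fx_lt_gx.
have cgf : (fun y => g y - f y) @ x --> g x - f x by exact: cvgB.
have := @cvgr_gt R _ _ (nbhs_filter x) _ _ cgf 0; rewrite subr_gt0 => /(_ fx_lt_gx).
by apply: filterS => y; rewrite subr_gt0.
Qed.

Lemma near_lt_rational (R : realType) n (f g : 'rV[R]_n -> R) x :
  rational_on setT f -> rational_on setT g -> f x < g x ->
  \forall y \near x, f y < g y.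
Proof.
move=> rf rg fx_lt_gx; have setT_open : open [set: 'rV[R]_n] := openT.
have cf := rational_on_continuous setT_open rf (x := x) I.
have cg := rational_on_continuous setT_open rg (x := x) I.
by have := near_lt_continuous cf cg fx_lt_gx.
Qed.

Lemma open_SigmaA (R : realType) : open (@SigmaA R).
Proof.
rewrite openE => x [/andP[? ?] /andP[? ?]]; rewrite /interior.
near=> y; split; apply/andP; split; near: y;
  apply: near_lt_rational => //; rational_by_cases.
Unshelve. all: by end_near.
Qed.

Lemma open_SigmaB (R : realType) : open (@SigmaB R).
Proof.
rewrite openE => x [/andP[? ?] [? [? ?]]]; rewrite /interior.
near=> y; split; [apply/andP; split|split; [|split]]; near: y;
  apply: near_lt_rational => //; rational_by_cases.
Unshelve. all: by end_near.
Qed.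

Lemma chartA_rational (R : realType) : rational_distribution_on (@SigmaA R) (@chartA R).
Proof.
split=> [i|y [/andP[? ?] /andP[? ?]]].
  apply: rational_on_rowl.
  by case=> [|[|[|[|l]]]] /=; rational_by_cases.
split=> [i|]; first by case: i => [[|[|[|[|i]]]] Hi] //; rewrite !mxE /=; lra.
by rewrite !big_ord_recr big_ord0 /= !mxE /=; lra.
Qed.

Lemma chartB_rational (R : realType) : rational_distribution_on (@SigmaB R) (@chartB R).
Proof.
split=> [i|y [/andP[? ?] [? [? ?]]]].
  apply: rational_on_rowl.
  by case=> [|[|[|[|[|l]]]]] /=; rational_by_cases.
split=> [i|]; first by case: i => [[|[|[|[|[|i]]]]] Hi] //; rewrite !mxE /=; lra.
by rewrite !big_ord_recr big_ord0 /= !mxE /=; lra.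
Qed.

Lemma unchartA_rational (R : realType) (U : set 'rV[R]_2) (w : 'rV[R]_2 -> 'rV[R]_4) :
  (forall i, rational_on U (fun y => w y 0 i)) ->
  forall i j, rational_on U (fun y => unchartA (w y) i j).
Proof.
move=> rw; apply: rational_on_rowl.
by case=> [|[|l]] /=; [apply: rational_add (rw 0) (rational_cst _ _) | exact: rw
  | exact: rational_cst].
Qed.

Lemma unchartB_rational (R : realType) (U : set 'rV[R]_3) (w : 'rV[R]_3 -> 'rV[R]_5) :
  (forall i, rational_on U (fun y => w y 0 i)) ->
  forall i j, rational_on U (fun y => unchartB (w y) i j).
Proof.
move=> rw; apply: rational_on_rowl.
by case=> [|[|[|l]]] /=; [apply: rational_add (rw 0) (rational_cst _ _) | exact: rw
  | exact: rw | exact: rational_cst].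
Qed.

Lemma smooth_branchA (R : realType) c1 c2 c3 c4 c5 :
  smooth_on (@SigmaA R) (fun x => unchartA (ab_branch (LA R) c1 c2 c3 c4 c5 (chartA x))).
Proof.
have [r_branch _] := ab_branch_rational c1 c2 c3 c4 c5 (@LA_pm1 R) (chartA_rational R).
by have := rational_on_smooth (@open_SigmaA R) (unchartA_rational r_branch).
Qed.

Lemma smooth_branchB (R : realType) c1 c2 c3 c4 c5 :
  smooth_on (@SigmaB R) (fun x => unchartB (ab_branch (LB R) c1 c2 c3 c4 c5 (chartB x))).
Proof.
have [r_branch _] := ab_branch_rational c1 c2 c3 c4 c5 (@LB_pm1 R) (chartB_rational R).
by have := rational_on_smooth (@open_SigmaB R) (unchartB_rational r_branch).
Qed.

Theorem lemma3 (R : realType) :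
  (forall p d : R, 2^-1 < p < 1 -> 0 < d < 2^-1 ->
     QA p d != 0 /\ RA p d != 0) /\
  (forall p d e : R, 2^-1 < p < 1 -> 0 < d -> 0 < e -> d + e < 2^-1 ->
     QB p d e != 0 /\ RB p d e != 0) /\
  smooth_on (@SigmaA R) (@F0A R) /\ smooth_on (@SigmaA R) (@F1A R) /\
  smooth_on (@SigmaB R) (@F0B R) /\ smooth_on (@SigmaB R) (@F1B R).
Proof.
split; [|split; [|split; [|split; [|split]]]].
- by move=> p d hp hd; split; apply: lt0r_neq0; [exact: QA_gt0 | exact: RA_gt0].
- move=> p d e hp hd he hde.
  by split; apply: lt0r_neq0; [exact: QB_gt0 | exact: RB_gt0].
- exact: smooth_branchA.
- exact: smooth_branchA.
- exact: smooth_branchB.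
- exact: smooth_branchB.
Qed.
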